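(* For every integer $n\ge0$, $U_n(x,y,a;q)=\mathbb{F}(aD_{xy})\{P_n(x,y)\}$.
   Context: $q$ is a fixed complex number with $0<|q|<1$; $(a;q)_n=\prod_{i=0}^{n-1}(1-aq^i)$; ${n\brack k}=\frac{(q;q)_n}{(q;q)_k(q;q)_{n-k}}$. $P_n(x,y)=\prod_{i=0}^{n-1}(x-q^iy)$ and $U_n(x,y,a;q)=\sum_{k=0}^n{n\brack k}(-1)^kq^{\binom k2}a^kP_{n-k}(x,y)$. The homogeneous $q$-difference operator acting on functions of $(x,y)$ is $D_{xy}\{f(x,y)\}=\frac{f(x,q^{-1}y)-f(qx,y)}{x-q^{-1}y}$, and the homogeneous $q$-shift operator is $\mathbb{F}(aD_{xy})=\sum_{n=0}^\infty\frac{(-1)^nq^{\binom n2}(aD_{xy})^n}{(q;q)_n}$ (with $D_{xy}^0$ the identity). *)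

From HB Require Import structures.
From mathcomp Require Import all_boot all_order all_algebra.
From mathcomp Require Import reals complex.
Set Implicit Arguments. Unset Strict Implicit. Unset Printing Implicit Defensive.
Import Order.TTheory GRing.Theory Num.Theory.
Local Open Scope ring_scope.

Section Defs.
Variable R : realType.
Local Notation C := R[i].

Definition qpoch (a q : C) (n : nat) : C := \prod_(i < n) (1 - a * q ^+ i).

Definition qbinom (q : C) (n k : nat) : C :=
  qpoch q q n / (qpoch q q k * qpoch q q (n - k)).

Definition Pn (q : C) (n : nat) (x y : C) : C := \prod_(i < n) (x - q ^+ i * y).

Definition Un (q : C) (n : nat) (x y a : C) : C :=
  \sum_(k < n.+1) qbinom q n k * (-1) ^+ k * q ^+ 'C(k, 2) * a ^+ k * Pn q (n - k) x y.

Definition Dxy (q : C) (f : C -> C -> C) : C -> C -> C :=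
  fun x y => (f x (q^-1 * y) - f (q * x) y) / (x - q^-1 * y).

(* k-th term of F(aD_xy){f} evaluated at (x,y):
   (-1)^k q^{binom k 2} (aD_xy)^k f / (q;q)_k, with (aD)^k = a^k D^k, D^0 = id *)
Definition Fterm (q a : C) (f : C -> C -> C) (k : nat) (x y : C) : C :=
  (-1) ^+ k * q ^+ 'C(k, 2) * (a ^+ k * iter k (Dxy q) f x y) / qpoch q q k.

Definition series_sums (u : nat -> C) (l : C) : Prop :=
  forall eps : C, 0 < eps -> exists N : nat, forall m : nat, (N <= m)%N ->
    `| \sum_(k < m) u k - l | < eps.

(* F(aD_xy){f}(x,y) = l, i.e. the defining series converges to l *)
Definition Fshift_eval (q a : C) (f : C -> C -> C) (x y l : C) : Prop :=
  series_sums (fun k => Fterm q a f k x y) l.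

End Defs.

From HB Require Import structures.
From mathcomp Require Import all_boot all_order all_algebra.
From mathcomp Require Import reals complex.
From mathcomp Require Import ring.
Import Order.TTheory GRing.Theory Num.Theory.
Set Implicit Arguments. Unset Strict Implicit. Unset Printing Implicit Defensive.
Local Open Scope ring_scope.

(* [D_xy] lowers the degree of [P_m] like a q-derivative:
   [D_xy P_m = (1 - q^m) P_(m-1)].  Hence [D_xy^k P_n] is
   [(1 - q^n) ... (1 - q^(n-k+1)) P_(n-k)], which vanishes for [k > n], so the
   series defining [F(a D_xy){P_n}] is a finite sum; dividing by [(q;q)_k] turns
   these products into the Gaussian binomials of [U_n].  Genericity of [x]
   with respect to [q^Z y] is preserved by the shifts [y -> y/q], [x -> q x]
   occurring in [D_xy], so all the denominators stay nonzero. *)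

Lemma series_sums_eventually_const (R : realType) (u : nat -> R[i]) (l : R[i])
    (N : nat) :
  (forall m, (N <= m)%N -> \sum_(k < m) u k = l) -> series_sums u l.
Proof.
move=> ul eps eps_gt0; exists N => m /ul ->.
by rewrite subrr normr0.
Qed.

Lemma expr_neq1 (R : numDomainType) (q : R) (j : nat) :
  `|q| < 1 -> q ^+ j.+1 != 1.
Proof.
move=> q_lt1; apply/eqP => qj1.
have : `|q| ^+ j.+1 < 1 by rewrite exprn_ilt1.
by rewrite -normrX qj1 normr1 ltxx.
Qed.

Section QDifference.
Variable R : realType.
Local Notation C := R[i].
Variable q : C.
Hypothesis q_neq0 : q != 0.

Definition qgeneric (x y : C) := forall m : int, x != q ^ m * y.

Lemma qgeneric_divr x y : qgeneric x y -> qgeneric x (q^-1 * y).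
Proof.
move=> gen m; rewrite mulrA -exprN1 -exprzDr ?unitfE //; exact: gen.
Qed.

Lemma qgeneric_mull x y : qgeneric x y -> qgeneric (q * x) y.
Proof.
move=> gen m; apply/eqP => qx_eq.
have x_eq : x = q^-1 * (q ^ m * y) by rewrite -qx_eq mulKf.
have := gen (m - 1); rewrite exprzDr ?unitfE // exprN1 {1}x_eq.
by rewrite mulrA [q^-1 * _]mulrC eqxx.
Qed.

Lemma qgeneric_denom_neq0 x y : qgeneric x y -> x - q^-1 * y != 0.
Proof. by move=> gen; rewrite subr_eq0 -exprN1; exact: gen. Qed.

Lemma Dxy_Pn m x y : x - q^-1 * y != 0 ->
  Dxy q (Pn q m) x y = (1 - q ^+ m) * Pn q m.-1 x y.
Proof.
move=> denom_neq0; rewrite /Dxy; case: m => [|m].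
  by rewrite /Pn !big_ord0 expr0 !subrr !mul0r.
rewrite /Pn !big_ord_recl /=.
have shift_y : \prod_(i < m) (x - q ^+ (bump 0 i) * (q^-1 * y)) =
    \prod_(i < m) (x - q ^+ i * y).
  apply: eq_bigr => i _.
  by rewrite /bump leq0n add1n exprS -mulrA (mulrCA (q ^+ i)) mulVKf.
have shift_x : \prod_(i < m) (q * x - q ^+ (bump 0 i) * y) =
    q ^+ m * \prod_(i < m) (x - q ^+ i * y).
  rewrite -[X in q ^+ X]card_ord -prodr_const -big_split /=.
  by apply: eq_bigr => i _; rewrite /bump leq0n add1n exprS mulrBr mulrA.
have qx_sub_y : q * x - y = q * (x - q^-1 * y) by rewrite mulrBr mulrA mulfV ?mul1r.
rewrite shift_y shift_x expr0 !mul1r qx_sub_y.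
apply: (mulIf denom_neq0); rewrite divfK // exprS; ring.
Qed.

Definition qfalling (n k : nat) : C := \prod_(i < k) (1 - q ^+ (n - i)).

Lemma iter_Dxy_Pn n k x y : qgeneric x y ->
  iter k (Dxy q) (Pn q n) x y = qfalling n k * Pn q (n - k) x y.
Proof.
elim: k x y => [|k IH] x y gen; first by rewrite /qfalling big_ord0 mul1r subn0.
rewrite /= {1}/Dxy (IH _ _ (qgeneric_divr gen)) (IH _ _ (qgeneric_mull gen)).
rewrite -mulrBr -mulrA.
have := Dxy_Pn (n - k) (qgeneric_denom_neq0 gen); rewrite /Dxy => ->.
rewrite /qfalling big_ord_recr /= subnS; ring.
Qed.

Lemma qfalling_qpoch n k : (k <= n)%N ->
  qfalling n k * qpoch q q (n - k) = qpoch q q n.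
Proof.
elim: k => [|k IH] lt_kn; first by rewrite /qfalling big_ord0 mul1r subn0.
rewrite -IH; last exact: ltnW.
rewrite /qfalling big_ord_recr /=.
have -> : (n - k = (n - k.+1).+1)%N by rewrite subnS prednK // subn_gt0.
rewrite /qpoch big_ord_recr /= -exprS; ring.
Qed.

Lemma qfalling_eq0 n k : (n < k)%N -> qfalling n k = 0.
Proof.
move=> lt_nk; rewrite /qfalling (bigD1 (Ordinal lt_nk)) //=.
by rewrite subnn expr0 subrr mul0r.
Qed.

Lemma qpoch_qq_neq0 k : `|q| < 1 -> qpoch q q k != 0.
Proof.
move=> q_lt1; apply/prodf_neq0 => i _.
by rewrite subr_eq0 eq_sym -exprS expr_neq1.
Qed.

Lemma Fterm_Pn_gt n k a x y : qgeneric x y -> (n < k)%N ->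
  Fterm q a (Pn q n) k x y = 0.
Proof.
move=> gen lt_nk.
by rewrite /Fterm iter_Dxy_Pn // qfalling_eq0 // !(mul0r, mulr0).
Qed.

Lemma Fterm_Pn_le n k a x y : `|q| < 1 -> qgeneric x y -> (k <= n)%N ->
  Fterm q a (Pn q n) k x y =
    qbinom q n k * (-1) ^+ k * q ^+ 'C(k, 2) * a ^+ k * Pn q (n - k) x y.
Proof.
move=> q_lt1 gen le_kn.
rewrite /Fterm iter_Dxy_Pn // /qbinom -(qfalling_qpoch le_kn).
have := qpoch_qq_neq0 k q_lt1; have := qpoch_qq_neq0 (n - k) q_lt1.
move=> ne1 ne2; field; by rewrite ne1 ne2.
Qed.

End QDifference.

Theorem mainTheorem4 (R : realType) (q : R[i]) (hq0 : 0 < `|q|) (hq1 : `|q| < 1)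
  (n : nat) (a x y : R[i])
  (hgen : forall m : int, x != q ^ m * y) :
  Fshift_eval q a (Pn q n) x y (Un q n x y a).
Proof.
have q_neq0 : q != 0 by rewrite -normr_gt0.
apply: (series_sums_eventually_const (N := n.+1)) => m le_nm.
rewrite -(subnKC le_nm) big_split_ord /= [X in _ + X]big1 ?addr0; last first.
  by move=> i _; rewrite Fterm_Pn_gt //= ltnS leq_addr.
by apply: eq_bigr => i _; rewrite Fterm_Pn_le // -ltnS.
Qed.
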